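(* Let $X$, $P$ (irreducible, row-stochastic), $\Sigma$, $\mu$, $\{A_i\}_{i\in X}$ be as in the context, with $\{A_i\}$ projectively uniformly hyperbolic with respect to $\Sigma$ and a multicone fixed; let $R$, $Q$, a recurrent class $C$, $\Sigma_C$, $\pi$ and $\mu_C$ be as in the context. Define $\vartheta:\Sigma_C\to\Sigma$ by $\vartheta((r_n)_{n\ge0})=(\tau(r_n))_{n\ge0}$. Then $\vartheta$ is surjective and $\vartheta_*\mu_C=\mu$.
   Context: $X$ finite; $P$ row-stochastic and irreducible; $\Sigma=\{x\in X^{\mathbb N_0}:P_{x_nx_{n+1}}>0\ \forall n\}$; $p$ the stationary probability vector; $\mu$ the Markov measure with $\mu([i_0,\dots,i_n])=p_{i_0}P_{i_0i_1}\cdots P_{i_{n-1}i_n}$. Projective uniform hyperbolicity: on $\widehat\Sigma=\{(x_n)_{n\in\mathbb Z}:P_{x_nx_{n+1}}>0\}$ with left shift $\widehat\sigma$ there is a continuous splitting $\mathbb R^2=E^d(\hat x)\oplus E^w(\hat x)$ into lines with $A_{x_0}E^*(\hat x)=E^*(\widehat\sigma\hat x)$ ($*=d,w$) and $n\ge1$ with $\|A_{x_{n-1}}\cdots A_{x_0}|_{E^w(\hat x)}\|<\|A_{x_{n-1}}\cdots A_{x_0}|_{E^d(\hat x)}\|$ for all $\hat x$. A multicone is a family $\{M_i\}$ of non-empty proper subsets of $\mathbb{RP}^1$, each a finite union of open intervals, with $\overline{[A_j](M_i)}\subset M_j$ whenever $P_{ij}>0$ ($[A]$ the projective action). Write $M_i=\bigsqcup_{a=1}^{m(i)}M_{i,a}$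 (components); for $P_{ij}>0$ let $\beta(i,a,j)$ be the unique $b$ with $[A_j](\overline{M_{i,a}})\subset M_{j,b}$. $R=\{((i,a),(j,b)):P_{ij}>0,\ 1\le a\le m(i),\ b=\beta(i,a,j)\}$, and for $r=((i,a),(j,b))$: $s(r)=(i,a)$, $t(r)=(j,b)$, $\tau(r)=j$. $Q_{r,r'}=P_{\tau(r)\tau(r')}$ if $t(r)=s(r')$, $0$ otherwise. A recurrent class is $C\subset R$ with $Q|_C$ irreducible and ($r\in C$, $Q_{r,r'}>0\Rightarrow r'\in C$). $\Sigma_C=\{(r_n)\in C^{\mathbb N_0}:Q_{r_nr_{n+1}}>0\}$, $\pi$ the stationary probability vector of $Q|_C$, $\mu_C$ the corresponding Markov measure on $\Sigma_C$. *)

From HB Require Import structures.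
From mathcomp Require Import all_boot all_order all_algebra.
From mathcomp Require Import all_classical all_reals all_analysis.
Set Implicit Arguments. Unset Strict Implicit. Unset Printing Implicit Defensive.
Import Order.TTheory GRing.Theory Num.Theory.
Import numFieldNormedType.Exports.
Local Open Scope classical_set_scope.
Local Open Scope ring_scope.

(* The point t0 is only needed because MathComp-Analysis measurable types    *)
(* must be pointed types; it plays no mathematical role.                     *)
Definition pseq (T : Type) (t0 : T) : Type := nat -> T.
HB.instance Definition _ (T : choiceType) (t0 : T) := Choice.on (pseq t0).
HB.instance Definition _ (T : choiceType) (t0 : T) :=
  isPointed.Build (pseq t0) (fun _ => t0).

Definition cyl (T : Type) (t0 : T) (w : seq T) : set (pseq t0) :=
  [set x | forall k, (k < size w)%N -> x k = nth t0 w k].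
Arguments cyl {T} t0 w.
Definition cylinders (T : Type) (t0 : T) : set (set (pseq t0)) :=
  [set cyl t0 w | w in [set: seq T]].
Arguments cylinders {T} t0.
(* T^N as a measurable type, with the cylinder (= product = Borel) sigma-algebra *)
Definition seqspace (T : choiceType) (t0 : T) := g_sigma_algebraType (cylinders t0).
Arguments seqspace {T} t0.

Section Defs.
Variable R : realType.

Definition fmul (T : finType) (A B : T -> T -> R) : T -> T -> R :=
  fun i j => \sum_(k : T) A i k * B k j.
Definition fid (T : finType) : T -> T -> R := fun i j => (i == j)%:R.
Definition fpow (T : finType) (A : T -> T -> R) (n : nat) : T -> T -> R :=
  iter n (fmul A) (@fid T).

Definition row_stochastic (T : finType) (P : T -> T -> R) :=
  (forall i j, 0 <= P i j) /\ (forall i, \sum_(j : T) P i j = 1).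
Definition irreducible (T : finType) (P : T -> T -> R) :=
  forall i j, exists n, 0 < fpow P n i j.
Definition stationary_prob (T : finType) (P : T -> T -> R) (p : T -> R) :=
  [/\ forall i, 0 <= p i, \sum_(i : T) p i = 1 &
      forall j, \sum_(i : T) p i * P i j = p j].

Definition restr (T : finType) (C : {set T}) (A : T -> T -> R) : T -> T -> R :=
  fun i j => if (i \in C) && (j \in C) then A i j else 0.
Definition irreducible_on (T : finType) (C : {set T}) (A : T -> T -> R) :=
  forall i j, i \in C -> j \in C -> exists n, 0 < fpow (restr C A) n i j.
(* pi is the stationary probability vector of A|_C (values off C irrelevant) *)
Definition stationary_prob_on (T : finType) (C : {set T}) (A : T -> T -> R)
    (pi : T -> R) :=
  [/\ forall i, i \in C -> 0 <= pi i, \sum_(i in C) pi i = 1 &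
      forall j, j \in C -> \sum_(i in C) pi i * A i j = pi j].

Fixpoint chain (T : Type) (A : T -> T -> R) (t : T) (w : seq T) : R :=
  if w is t' :: w' then A t t' * chain A t' w' else 1.

(* mu([i0,...,in]) = p_{i0} P_{i0 i1} ... P_{i(n-1) in}; as a measure on X^N,
   concentrated on Sigma *)
Definition markov_measure (X : finType) (x0 : X)
    (mu : {measure set (seqspace x0) -> \bar R}) (p : X -> R) (P : X -> X -> R) :=
  forall (i0 : X) (w : seq X), mu (cyl x0 (i0 :: w)) = (p i0 * chain P i0 w)%:E.

(* Markov measure on C^N (as a measure on T^N concentrated on C^N) *)
Definition markov_measure_on (T : finType) (t0 : T) (C : {set T})
    (mu : {measure set (seqspace t0) -> \bar R}) (pi : T -> R) (Q : T -> T -> R) :=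
  forall (r0 : T) (w : seq T), mu (cyl t0 (r0 :: w)) =
    (if all (fun r => r \in C) (r0 :: w) then pi r0 * chain Q r0 w else 0)%:E.

(* The projective line RP^1 = R / pi Z : a point is represented by an angle   *)
(* t (the line spanned by (cos t, sin t)); subsets of RP^1 are represented by *)
(* their (pi-periodic) preimages in R.                                        *)
Definition uvec (t : R) : 'cV[R]_2 :=
  \col_(k < 2) (if k == ord0 then cos t else sin t).
Definition parallel (v w : 'cV[R]_2) : Prop :=
  v ord0 ord0 * w ord_max ord0 - v ord_max ord0 * w ord0 ord0 = 0.
Definition vnorm (v : 'cV[R]_2) : R :=
  Num.sqrt (v ord0 ord0 ^+ 2 + v ord_max ord0 ^+ 2).
Definition pimg (A : 'M[R]_2) (M : set R) : set R :=
  [set s | exists2 t, M t & parallel (A *m uvec t) (uvec s)].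
(* lift of the open arc of RP^1 from [a] to [b] *)
Definition arc (a b : R) : set R :=
  [set t | exists k : int, a < t + k%:~R * pi < b].
(* M is (the lift of) an open interval of RP^1 which is a proper subset *)
Definition lifted_open_arc (M : set R) :=
  exists a b, [/\ a < b, b <= a + pi & M = arc a b].

Section Multicone.
Variables (X : finType) (P : X -> X -> R) (A : X -> 'M[R]_2).
Variables (m : X -> nat) (Mc : forall i : X, 'I_(m i) -> set R).

Definition Mcone (i : X) : set R := [set t | exists a : 'I_(m i), @Mc i a t].

(* {M_i} is a multicone whose components are the M_{i,a}, a < m i:
   the M_{i,a} are pairwise disjoint open arcs (hence exactly the connected
   components of M_i, and M_i is a finite union of open intervals) *)
Definition multicone_components :=
  [/\ forall i (a : 'I_(m i)), lifted_open_arc (@Mc i a),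
      forall i (a b : 'I_(m i)), a != b -> @Mc i a `&` @Mc i b = set0,
      forall i, Mcone i <> set0 /\ Mcone i <> setT &
      forall i j, 0 < P i j -> closure (pimg (A j) (Mcone i)) `<=` Mcone j].

Definition cstate := {i : X & 'I_(m i)}.
Definition rstate := (cstate * cstate)%type.

(* r = ((i,a),(j,b)) belongs to R : P_ij > 0 and b = beta(i,a,j), i.e.
   [A_j](closure M_{i,a}) is contained in M_{j,b} *)
Definition Rrel (r : rstate) : Prop :=
  0 < P (tag r.1) (tag r.2) /\
  pimg (A (tag r.2)) (closure (Mc (tagged r.1))) `<=` Mc (tagged r.2).

Definition tau (r : rstate) : X := tag r.2.

Definition Qm (r r' : rstate) : R :=
  if r.2 == r'.1 then P (tau r) (tau r') else 0.

Definition recurrent_class (C : {set rstate}) :=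
  [/\ exists r, r \in C, forall r, r \in C -> Rrel r, irreducible_on C Qm &
      forall r r', r \in C -> Rrel r' -> 0 < Qm r r' -> r' \in C].

Definition SigmaC (C : {set rstate}) : set (nat -> rstate) :=
  [set y | forall n, y n \in C /\ 0 < Qm (y n) (y n.+1)].

Definition vartheta (y : nat -> rstate) : nat -> X := fun n => tau (y n).

End Multicone.

Section PUH.
Variables (X : finType) (P : X -> X -> R) (A : X -> 'M[R]_2).

Definition Sigma : set (nat -> X) := [set x | forall n, 0 < P (x n) (x n.+1)].
Definition Sighat : set (int -> X) := [set x | forall n : int, 0 < P (x n) (x (n + 1))].
Definition hshift (x : int -> X) : int -> X := fun n => x (n + 1).

Fixpoint cocycle (x : int -> X) (n : nat) : 'M[R]_2 :=
  if n is k.+1 then A (x k%:Z) *m cocycle x k else 1%:M.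

(* continuity of a map Sighat -> RP^1 (product topology on Sighat; on RP^1
   the distance |sin(s - t)| between the lines of angles s, t) *)
Definition cont_Sighat (E : (int -> X) -> R) :=
  forall x, Sighat x -> forall e, 0 < e -> exists N : nat,
    forall y, Sighat y -> (forall n : int, `|n| <= N%:Z -> y n = x n) ->
      `|sin (E y - E x)| < e.

Definition proj_unif_hyp :=
  exists Ed Ew : (int -> X) -> R,
  [/\ cont_Sighat Ed /\ cont_Sighat Ew,
      (* E^d(x) and E^w(x) are distinct lines, so R^2 = E^d + E^w *)
      forall x, Sighat x -> sin (Ed x - Ew x) != 0,
      forall x, Sighat x ->
        parallel (A (x 0) *m uvec (Ed x)) (uvec (Ed (hshift x))) /\
        parallel (A (x 0) *m uvec (Ew x)) (uvec (Ew (hshift x))) &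
      exists n : nat, (0 < n)%N /\ forall x, Sighat x ->
        vnorm (cocycle x n *m uvec (Ew x)) < vnorm (cocycle x n *m uvec (Ed x))].

End PUH.
End Defs.

From HB Require Import structures.
From mathcomp Require Import all_boot all_order all_algebra.
From mathcomp Require Import all_classical all_reals all_analysis.
Import Order.TTheory GRing.Theory Num.Theory.
Import numFieldNormedType.Exports.
Local Open Scope classical_set_scope.
Local Open Scope ring_scope.
Set Implicit Arguments. Unset Strict Implicit. Unset Printing Implicit Defensive.

(* Because the components M_{j,b} are pairwise disjoint, an edge of R is
   determined by its source and its label tau.  Hence the Q-mass that a state
   r of C sends to states of C labelled j is either 0 or P_{tau(r) j}.
   Irreducibility of Q|_C makes pi positive on C, and stationarity of pi then
   forces no mass to be lost: from r in C every label j with P_{tau(r) j} > 0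
   is reached by exactly one state of C.  Consequently the image of pi under
   tau is P-stationary, hence equal to p; paths of Sigma lift step by step to
   Sigma_C; and the mu_C-measure of the tau-preimage of a cylinder
   [i_0 ... i_n] telescopes to p_{i_0} P_{i_0 i_1} ... P_{i_{n-1} i_n}.
   Finite measures agreeing on the pi-system of cylinders agree everywhere. *)

Section StationaryVectors.
Variables (R : realType) (T : finType) (A : T -> T -> R).
Hypothesis A_ge0 : forall i j, 0 <= A i j.

Lemma fpowS n i j : fpow A n.+1 i j = \sum_k A i k * fpow A n k j.
Proof. by []. Qed.

Lemma fpow_ge0 n i j : 0 <= fpow A n i j.
Proof.
elim: n i j => [|n IHn] i j; first by rewrite /fpow /fid ler0n.
by rewrite fpowS; apply: sumr_ge0 => k _; apply: mulr_ge0.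
Qed.

Section Invariant.
Variable v : T -> R.
Hypothesis vA : forall j, \sum_i v i * A i j = v j.

Lemma invariant_fpow n j : \sum_i v i * fpow A n i j = v j.
Proof.
elim: n j => [|n IHn] j.
  rewrite /fpow /fid /= (bigD1 j) //= eqxx mulr1 big1 ?addr0 // => i.
  by rewrite eq_sym => /negbTE ->; rewrite mulr0.
under eq_bigr do rewrite fpowS mulr_sumr.
rewrite exchange_big /= -[RHS]IHn; apply: eq_bigr => k _.
by rewrite -(vA k) mulr_suml; apply: eq_bigr => i _; rewrite mulrA.
Qed.

Lemma invariant_fpow_le n i j : (forall k, 0 <= v k) -> v i * fpow A n i j <= v j.
Proof.
move=> v_ge0; rewrite -(invariant_fpow n j) (bigD1 i) //= lerDl.
by apply: sumr_ge0 => k _; apply: mulr_ge0 => //; apply: fpow_ge0.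
Qed.

End Invariant.

Lemma stationary_prob_gt0 v :
  irreducible A -> stationary_prob A v -> forall j, 0 < v j.
Proof.
move=> irrA [v_ge0 v_sum1 vA] j.
have : \sum_i v i != 0 by rewrite v_sum1 oner_neq0.
rewrite psumr_neq0 // => /hasP[i _ /andP[_ vi_gt0]].
have [n Anij] := irrA i j.
exact: lt_le_trans (mulr_gt0 vi_gt0 Anij) (invariant_fpow_le vA n i j v_ge0).
Qed.

(* With [c = min_k q_k / p_k], [q - c p] is a nonnegative invariant vector
   vanishing at the minimiser, hence everywhere by irreducibility. *)
Lemma stationary_prob_unique p q : irreducible A ->
  stationary_prob A p -> stationary_prob A q -> q =1 p.
Proof.
move=> irrA sp sq j; have p_gt0 := stationary_prob_gt0 irrA sp.
case: sp sq => [_ p_sum1 pA] [_ q_sum1 qA].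
pose i0 := [arg min_(i < j) (q i / p i)]%O.
have i0_min k : q i0 / p i0 <= q k / p k.
  by rewrite /i0; case: arg_minP => // i _; apply.
pose c := q i0 / p i0; pose v k := q k - c * p k.
have v_ge0 k : 0 <= v k by rewrite subr_ge0 -ler_pdivlMr.
have vA k : \sum_i v i * A i k = v k.
  rewrite /v -(qA k) -(pA k) mulr_sumr -sumrB.
  by apply: eq_bigr => i _; rewrite mulrBl mulrA.
have v_i0 : v i0 = 0 by rewrite /v /c divfK ?subrr ?gt_eqF.
have v0 k : v k = 0.
  apply/eqP; rewrite eq_le v_ge0 andbT leNgt; apply/negP => vk_gt0.
  have [n Ank] := irrA k i0.
  by have := invariant_fpow_le vA n k i0 v_ge0; rewrite v_i0 leNgt mulr_gt0.
have qE k : q k = c * p k by apply/eqP; rewrite -subr_eq0 -/(v k) v0.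
have c1 : c = 1.
  by move: q_sum1; under eq_bigr do rewrite qE; rewrite -mulr_sumr p_sum1 mulr1.
by rewrite qE c1 mul1r.
Qed.

End StationaryVectors.

Lemma stationary_prob_on_gt0 (R : realType) (T : finType) (A : T -> T -> R)
    (C : {set T}) v : (forall i j, 0 <= A i j) ->
  irreducible_on C A -> stationary_prob_on C A v -> forall j, j \in C -> 0 < v j.
Proof.
move=> A_ge0 irrCA [v_ge0 v_sum1 vA] j Cj.
pose w i := if i \in C then v i else 0.
have rA_ge0 i k : 0 <= restr C A i k by rewrite /restr; case: ifP.
have w_ge0 k : 0 <= w k by rewrite /w; case: ifPn => [/v_ge0|].
have wA k : \sum_i w i * restr C A i k = w k.
  rewrite /w /restr; have [Ck|_] := boolP (k \in C); last first.
    by rewrite big1 // => i _; rewrite andbF mulr0.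
  rewrite -(vA k Ck) [RHS]big_mkcond /=; apply: eq_bigr => i _.
  by case: (i \in C); rewrite ?mul0r ?andbT.
have : \sum_(i in C) v i != 0 by rewrite v_sum1 oner_neq0.
rewrite psumr_neq0 // => /hasP[i _ /andP[Ci vi_gt0]].
have [n Anij] := irrCA i j Ci Cj.
have := invariant_fpow_le rA_ge0 wA n i j w_ge0; rewrite /w Ci Cj.
exact/lt_le_trans/mulr_gt0.
Qed.

Lemma parallel_uvec_exists (R : realType) (v : 'cV[R]_2) :
  exists s, parallel v (uvec s).
Proof.
rewrite /parallel /uvec.
have [v0|v0] := eqVneq (v ord0 ord0) 0.
  by exists (pi / 2); rewrite !mxE /= v0 cos_pihalf mul0r mulr0 subrr.
set a := atan (v ord_max ord0 / v ord0 ord0); exists a; rewrite !mxE /=.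
have [a_bnd tan_a] := atan_def (v ord_max ord0 / v ord0 ord0).
have cos_a_neq0 : cos a != 0 by rewrite gt_eqF // cos_gt0_pihalf.
have -> : sin a = v ord_max ord0 / v ord0 ord0 * cos a.
  by rewrite -tan_a /tan divfK.
by rewrite mulrA mulrCA divff // mulr1 subrr.
Qed.

Lemma lifted_open_arc_nonempty (R : realType) (M : set R) :
  lifted_open_arc M -> exists t, M t.
Proof.
move=> [a [b [ab _ ->]]]; exists ((a + b) / 2), 0.
by rewrite mulr0z mul0r addr0; have [-> ->] := midf_lt ab.
Qed.

Lemma chain_rcons (R : realType) (T : Type) (Q : T -> T -> R) a u r :
  chain Q a (rcons u r) = chain Q a u * Q (last a u) r.
Proof. by elim: u a => [|b u IHu] a /=; rewrite ?mulr1 ?mul1r ?IHu ?mulrA. Qed.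

Lemma measure_big_setU d (U : measurableType d) (R : realType)
    (mu : {measure set U -> \bar R}) (I : finType) (P : pred I) (F : I -> set U) :
  (forall i, measurable (F i)) -> trivIset setT F ->
  mu (\big[setU/set0]_(i | P i) F i) = (\sum_(i | P i) mu (F i))%E.
Proof.
move=> mF tF; rewrite -bigcup_seq_cond measure_fin_bigcup //.
- rewrite (bigfs _ (index_enum_uniq I)) => [|i _]; last by rewrite mem_index_enum.
  by apply: eq_fsbigl; apply/seteqP; split => i; rewrite /= mem_index_enum.
- exact: finite_finset.
- exact: sub_trivIset tF.
Qed.

Section Cylinders.
Variables (T : choiceType) (t0 : T).

Lemma cyl_measurable w : measurable (cyl t0 w : set (seqspace t0)).
Proof. by apply: sub_sigma_algebra; exists w. Qed.

Lemma cyl_nil : cyl t0 [::] = setT.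
Proof. by apply/seteqP; split => // y _ k. Qed.

Lemma cylI u v :
  cyl t0 u `&` cyl t0 v = set0 \/ exists w, cyl t0 u `&` cyl t0 v = cyl t0 w.
Proof.
wlog uv : u v / (size u <= size v)%N.
  move=> Huv; have [|/ltnW] := leqP (size u) (size v); first exact: Huv.
  by rewrite setIC; apply: Huv.
have [uv_agree|uv_clash] :=
  pselect (forall k, (k < size u)%N -> nth t0 u k = nth t0 v k).
  right; exists v; apply/seteqP; split => [y [] //|y yv]; split => // k ku.
  by rewrite (yv k (leq_trans ku uv)) uv_agree.
left; apply/seteqP; split => // y [yu yv]; apply: uv_clash => k ku.
by rewrite -(yu k ku) (yv k (leq_trans ku uv)).
Qed.

End Cylinders.

Section FiniteAlphabet.
Variables (T : finType) (t0 : T).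

Lemma measure_cyl_nil (R : realType) (mu : {measure set (seqspace t0) -> \bar R}) :
  mu (cyl t0 [::]) = (\sum_t mu (cyl t0 [:: t]))%E.
Proof.
have -> : cyl t0 [::] = \big[setU/set0]_t cyl t0 [:: t].
  rewrite -bigcup_seq_cond; apply/seteqP; split => // y _.
  by exists (y 0%N); rewrite /= ?mem_index_enum // => -[].
apply: measure_big_setU => [t|i j _ _ [y [yi yj]]]; first exact: cyl_measurable.
by move: (yi 0%N erefl) (yj 0%N erefl) => /= -> ->.
Qed.

Lemma cyl_measure_unique (R : realType)
    (m1 m2 : {measure set (seqspace t0) -> \bar R}) : (m2 setT < +oo)%E ->
  (forall t w, m1 (cyl t0 (t :: w)) = m2 (cyl t0 (t :: w))) ->
  forall B, measurable B -> m1 B = m2 B.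
Proof.
move=> m2_fin m1m2 B mB.
pose G : set (set (seqspace t0)) := cylinders t0 `|` [set set0].
have G_meas : G `<=` measurable.
  by move=> _ [[w _ <-]|->]; [exact: cyl_measurable|exact: measurable0].
have G_setI : setI_closed G.
  move=> _ _ [[u _ <-]|->] [[v _ <-]|->]; rewrite ?set0I ?setI0; try by right.
  by case: (cylI t0 u v) => [->|[w ->]]; [right|left; exists w].
have m2m1 A : G A -> m2 A = m1 A.
  move=> [[[|t w] _ <-]|->]; rewrite ?measure0 //.
  by rewrite measure_cyl_nil [RHS]measure_cyl_nil; apply: eq_bigr => t _; rewrite m1m2.
have G_cover : \bigcup_(k : nat) [set: seqspace t0] = setT by rewrite bigcup_const.
have G_T (k : nat) : G setT by left; exists [::]; rewrite ?cyl_nil.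
apply/esym/(g_sigma_algebra_measure_unique _ G_meas (fun=> setT) G_T G_cover
  m2 m1 G_setI m2m1) => //.
by apply: sub_sigma_algebra2 mB => A cylA; left.
Qed.

Lemma markov_measure_setT (R : realType) (mu : {measure set (seqspace t0) -> \bar R})
    (p : T -> R) (P : T -> T -> R) :
  markov_measure mu p P -> \sum_i p i = 1 -> mu setT = 1%:E.
Proof.
move=> mu_markov p_sum1; rewrite -cyl_nil measure_cyl_nil.
by under eq_bigr do rewrite mu_markov /= mulr1; rewrite sumEFin p_sum1.
Qed.

Variables (Y : choiceType) (y0 : Y) (f : T -> Y).

Definition fcyl (u : seq T) (w : seq Y) : set (seqspace t0) :=
  [set y | cyl t0 u y /\ forall k, (k < size w)%N -> f (y (size u + k)%N) = nth y0 w k].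

Lemma fcyl_nil u : fcyl u [::] = cyl t0 u.
Proof. by apply/seteqP; split => y; [case|split]. Qed.

Lemma fcyl_cons u j w :
  fcyl u (j :: w) = \big[setU/set0]_(r | f r == j) fcyl (rcons u r) w.
Proof.
rewrite -bigcup_seq_cond; apply/seteqP.
split=> [y [yu yw]|y [r /andP[_ /eqP <-] [yur yw]]].
  exists (y (size u)).
    by rewrite /= mem_index_enum; move: (yw 0%N isT); rewrite addn0 => -> /=.
  split=> [k|k kw]; last by rewrite size_rcons addSnnS (yw k.+1).
  rewrite size_rcons ltnS leq_eqVlt nth_rcons => /orP[/eqP ->|ku].
    by rewrite ltnn eqxx.
  by rewrite ku yu.
have yu k : (k < size u)%N -> y k = nth t0 u k.
  by move=> ku; rewrite yur ?nth_rcons ?ku // size_rcons ltnS ltnW.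
split=> // -[|k] /= kw; last by rewrite addnS -addSn -(size_rcons u r) yw.
by rewrite addn0 yur ?nth_rcons ?ltnn ?eqxx // size_rcons.
Qed.

Lemma fcyl_measurable u w : measurable (fcyl u w).
Proof.
elim: w u => [|j w IHw] u; first by rewrite fcyl_nil; apply: cyl_measurable.
by rewrite fcyl_cons; apply: bigsetU_measurable => r _; apply: IHw.
Qed.

Lemma trivIset_fcyl_rcons u w : trivIset setT (fun r => fcyl (rcons u r) w).
Proof.
move=> r r' _ _ [y [[yr _] [yr' _]]].
move: (yr (size u)) (yr' (size u)); rewrite !size_rcons !nth_rcons ltnn eqxx.
by move=> -> // -> //.
Qed.

Lemma preimage_cyl_fcyl w :
  (fun y : seqspace t0 => f \o y : seqspace y0) @^-1` cyl y0 w = fcyl [::] w.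
Proof.
by apply/seteqP; split=> [y yw|y [_ yw] k kw]; [split=> // k kw|]; apply: yw.
Qed.

Lemma measurable_comp_seq :
  measurable_fun setT (fun y : seqspace t0 => f \o y : seqspace y0).
Proof.
apply: (@measurability _ _ (seqspace t0) (seqspace y0) setT _ (cylinders y0))
  => // _ [_ [w _ <-] <-].
by rewrite setTI preimage_cyl_fcyl; apply: fcyl_measurable.
Qed.

End FiniteAlphabet.
Arguments fcyl {T} t0 {Y} y0 f u w.

Section Multicone.
Variables (R : realType) (X : finType) (P : X -> X -> R) (A : X -> 'M[R]_2).
Variables (m : X -> nat) (Mc : forall i : X, 'I_(m i) -> set R).
Hypothesis multicone : multicone_components P A Mc.

(* The image of the nonempty set [closure M_{i,a}] lies in the disjoint
   components [M_{j,b}] and [M_{j,b'}] of [M_j], so [b = b']. *)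
Lemma Rrel_inj (r1 r2 : rstate m) : Rrel P A Mc r1 -> Rrel P A Mc r2 ->
  r1.1 = r2.1 -> tau r1 = tau r2 -> r1 = r2.
Proof.
case: r1 r2 => [c [j b1]] [c' [j' b2]] [_ img1] [_ img2] /= cc'.
rewrite /tau /= => jj'; subst c' j'.
have [b1b2|b1b2] := eqVneq b1 b2; first by rewrite b1b2.
case: multicone => arcs disj _ _.
have [t Mt] := lifted_open_arc_nonempty (arcs _ (tagged c)).
have [s As] := parallel_uvec_exists (A j *m uvec t).
have img_s : pimg (A j) (closure (Mc (tagged c))) s.
  by exists t => //; apply: subset_closure.
suff : (Mc b1 `&` Mc b2) s by rewrite disj.
by split; [apply: img1 | apply: img2].
Qed.

Variables (C : {set rstate m}) (piC : rstate m -> R) (p : X -> R).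
Hypothesis P_stoch : row_stochastic P.
Hypothesis P_irr : irreducible P.
Hypothesis p_stat : stationary_prob P p.
Hypothesis C_rec : recurrent_class P A Mc C.
Local Notation Q := (Qm (m:=m) P).
Hypothesis piC_stat : stationary_prob_on C Q piC.

Definition Qmass (r : rstate m) (j : X) := \sum_(r' in C | tau r' == j) Q r r'.

Lemma Qm_ge0 (r r' : rstate m) : 0 <= Q r r'.
Proof. by rewrite /Qm; case: ifP => // _; case: P_stoch. Qed.

Lemma piC_gt0 r : r \in C -> 0 < piC r.
Proof.
by case: C_rec => _ _ irrC _; exact: (stationary_prob_on_gt0 Qm_ge0 irrC piC_stat).
Qed.

Lemma Qmass_succ r j r' :
  r' \in C -> r'.1 = r.2 -> tau r' = j -> Qmass r j = P (tau r) j.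
Proof.
move=> Cr' r'1 tr'; case: C_rec => _ C_R _ _.
rewrite /Qmass (bigD1 r') /=; last by rewrite Cr' tr' eqxx.
rewrite big1 ?addr0 => [|r'' /andP[/andP[Cr'' /eqP tr''] r''r']].
  by rewrite /Qm r'1 eqxx tr'.
rewrite /Qm; case: eqP => // r''1; move/eqP: r''r'; case.
by apply: Rrel_inj; [exact: C_R|exact: C_R|rewrite -r''1 r'1|rewrite tr'' tr'].
Qed.

Lemma Qmass_eq0 r j :
  (forall r', r' \in C -> r'.1 = r.2 -> tau r' != j) -> Qmass r j = 0.
Proof.
move=> no_succ; rewrite /Qmass big1 // => r' /andP[Cr' tr'].
by rewrite /Qm; case: eqP => // r1; move: (no_succ r' Cr' (esym r1)); rewrite tr'.
Qed.

Lemma Qmass_le r j : Qmass r j <= P (tau r) j.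
Proof.
case: (pselect (exists r', [/\ r' \in C, r'.1 = r.2 & tau r' = j])).
  by case=> r' [Cr' r'1 tr']; rewrite (Qmass_succ Cr' r'1 tr').
move=> no_succ; rewrite Qmass_eq0; first by case: P_stoch.
by move=> r' Cr' r'1; apply/eqP => tr'; apply: no_succ; exists r'.
Qed.

Lemma sum_Qmass r : \sum_j Qmass r j = \sum_(r' in C) Q r r'.
Proof. by rewrite [RHS](partition_big (@tau X m) predT). Qed.

(* Stationarity of [piC] spreads the total mass [1] over rows of mass at
   most [1] with positive weights, so no row of [Q] can lose mass outside C. *)
Lemma sum_Qmass_eq1 r : r \in C -> \sum_j Qmass r j = 1.
Proof.
case: piC_stat => piC_ge0 piC_sum1 piCQ Cr.
have row_le1 r' : \sum_j Qmass r' j <= 1.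
  by case: P_stoch => _ /(_ (tau r')) <-; apply: ler_sum => j _; apply: Qmass_le.
have defect_ge0 r' : r' \in C -> 0 <= piC r' * (1 - \sum_j Qmass r' j).
  by move=> Cr'; rewrite mulr_ge0 ?subr_ge0 ?piC_ge0.
have defect0 : \sum_(r' in C) piC r' * (1 - \sum_j Qmass r' j) = 0.
  under eq_bigr do rewrite sum_Qmass mulrBr mulr1 mulr_sumr.
  rewrite sumrB exchange_big /= piC_sum1.
  by under eq_bigr => r' Cr' do rewrite piCQ //; rewrite piC_sum1 subrr.
move/eqP: (psumr_eq0P defect_ge0 defect0 Cr).
by rewrite mulf_eq0 gt_eqF ?piC_gt0 //= subr_eq0 eq_sym => /eqP.
Qed.

Lemma Qmass_full r j : r \in C -> Qmass r j = P (tau r) j.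
Proof.
move=> Cr; apply/eqP; rewrite eq_sym -subr_eq0; apply/eqP.
have gap_ge0 j' : predT j' -> 0 <= P (tau r) j' - Qmass r j'.
  by rewrite subr_ge0 Qmass_le.
apply: (psumr_eq0P gap_ge0) => //.
by rewrite sumrB sum_Qmass_eq1 //; case: P_stoch => _ ->; rewrite subrr.
Qed.

Lemma succ_in_C r j : r \in C -> 0 < P (tau r) j ->
  exists r', [/\ r' \in C, r'.1 = r.2 & tau r' = j].
Proof.
move=> Cr; rewrite -(Qmass_full j Cr).
apply: contraPP => no_succ; rewrite Qmass_eq0 ?ltxx // => r' Cr' r'1.
by apply/eqP => tr'; apply: no_succ; exists r'.
Qed.

Lemma sum_piC_tau i : \sum_(r in C | tau r == i) piC r = p i.
Proof.
case: (P_stoch) (piC_stat) => P_ge0 _ [piC_ge0 piC_sum1 piCQ].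
pose q k := \sum_(r in C | tau r == k) piC r.
apply: (stationary_prob_unique (q := q) P_ge0 P_irr p_stat); split.
- by move=> k; apply: sumr_ge0 => r /andP[/piC_ge0].
- by rewrite -piC_sum1 [RHS](partition_big (@tau X m) predT).
move=> j; transitivity (\sum_(r in C) piC r * Qmass r j).
  rewrite [RHS](partition_big (@tau X m) predT) //=; apply: eq_bigr => k _.
  rewrite mulr_suml; apply: eq_bigr => r /andP[Cr /eqP <-].
  by rewrite Qmass_full.
under eq_bigr do rewrite mulr_sumr.
rewrite exchange_big /=; apply: eq_bigr => r' /andP[Cr' _].
by rewrite piCQ.
Qed.

Lemma vartheta_surj x : Sigma P x -> exists2 y, SigmaC P C y & vartheta y = x.
Proof.
move=> Sx; case: (P_stoch) => P_ge0 _.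
have [a Ca ta] : exists2 a, a \in C & tau a = x 0%N.
  have : \sum_(r in C | tau r == x 0%N) piC r != 0.
    by rewrite sum_piC_tau gt_eqF // (stationary_prob_gt0 P_ge0 P_irr p_stat).
  rewrite psumr_neq0 => [/hasP[a _ /andP[/andP[Ca /eqP ta] _]]|r /andP[Cr _]].
  - by exists a.
  - by rewrite ltW ?piC_gt0.
pose next r j := odflt r [pick r' | [&& r' \in C, r'.1 == r.2 & tau r' == j]].
have nextP r j : r \in C -> 0 < P (tau r) j ->
    [/\ next r j \in C, (next r j).1 = r.2 & tau (next r j) = j].
  move=> Cr Prj; rewrite /next.
  case: pickP => [r' /and3P[-> /eqP -> /eqP ->] //|none].
  have [r' [Cr' r'1 tr']] := succ_in_C Cr Prj.
  by move: (none r'); rewrite Cr' r'1 tr' !eqxx.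
pose y := fix y n := if n is k.+1 then next (y k) (x k.+1) else a.
have step n : y n \in C -> tau (y n) = x n ->
    [/\ y n.+1 \in C, (y n.+1).1 = (y n).2 & tau (y n.+1) = x n.+1].
  by move=> Cn tn; apply: nextP => //; rewrite tn; apply: Sx.
have yP n : y n \in C /\ tau (y n) = x n.
  by elim: n => [|n [Cn tn]]; [split | case: (step n Cn tn)].
exists y => [n|]; last by apply/funext => n; case: (yP n).
have [Cn tn] := yP n; have [_ y1 ty] := step n Cn tn.
by split => //; rewrite /Qm y1 eqxx ty tn; apply: Sx.
Qed.

Variables (x0 : X) (r0 : rstate m).
Variables (mu : {measure set (seqspace x0) -> \bar R})
  (muC : {measure set (seqspace r0) -> \bar R}).
Hypothesis mu_markov : markov_measure mu p P.
Hypothesis muC_markov : markov_measure_on C muC piC Q.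

Local Notation fcylC := (fcyl r0 x0 (@tau X m)).

(* Extending the label word by [j] multiplies by [Qmass (last a u) j],
   which is [P (tau (last a u)) j] because [last a u] lies in C. *)
Lemma muC_fcyl w a u :
  muC (fcylC (a :: u) w) =
  ((if all (fun r => r \in C) (a :: u) then piC a * chain Q a u else 0) *
   chain P (tau (last a u)) w)%:E.
Proof.
elim: w a u => [|j w IHw] a u; first by rewrite fcyl_nil muC_markov mulr1.
rewrite fcyl_cons measure_big_setU; last 2 first.
- by move=> r; apply: fcyl_measurable.
- exact: trivIset_fcyl_rcons.
under eq_bigr => r /eqP tr do rewrite rcons_cons IHw last_rcons tr.
rewrite sumEFin /=; congr EFin.
have [/andP[Ca Cu]|notC] := boolP ((a \in C) && all (fun r => r \in C) u); last first.
  rewrite mul0r big1 // => r _.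
  by rewrite all_rcons andbCA (negbTE notC) andbF mul0r.
have allC : all (fun r => r \in C) (a :: u) by rewrite /= Ca.
rewrite -(Qmass_full j (allP allC _ (mem_last a u))) mulrA -mulr_suml.
congr (_ * _); rewrite /Qmass mulr_sumr big_mkcondl; apply: eq_bigr => r _.
by rewrite all_rcons Ca Cu chain_rcons; case: (r \in C); rewrite ?mulr0 ?mulrA.
Qed.

Lemma muC_preimage_cyl i w :
  muC (@vartheta X m @^-1` cyl x0 (i :: w)) = mu (cyl x0 (i :: w)).
Proof.
rewrite (preimage_cyl_fcyl r0 x0 (@tau X m)) fcyl_cons.
rewrite measure_big_setU; last 2 first.
- by move=> r; apply: fcyl_measurable.
- exact: trivIset_fcyl_rcons.
under eq_bigr => r /eqP tr do rewrite muC_fcyl /= andbT mulr1 tr.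
rewrite sumEFin mu_markov -sum_piC_tau big_mkcondl mulr_suml.
by congr EFin; apply: eq_bigr => r _; case: (r \in C); rewrite ?mul0r.
Qed.

End Multicone.

Theorem proposition3p2 (R : realType) (X : finType) (P : X -> X -> R)
  (A : X -> 'M[R]_2) (p : X -> R)
  (m : X -> nat) (Mc : forall i : X, 'I_(m i) -> set R)
  (C : {set rstate m}) (piC : rstate m -> R)
  (x0 : X) (r0 : rstate m)
  (mu : {measure set (seqspace x0) -> \bar R})
  (muC : {measure set (seqspace r0) -> \bar R}) :
  (forall i, A i \in unitmx) ->
  row_stochastic P -> irreducible P -> stationary_prob P p ->
  proj_unif_hyp P A ->
  multicone_components P A Mc ->
  recurrent_class P A Mc C ->
  stationary_prob_on C (Qm (m:=m) P) piC ->
  markov_measure mu p P ->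
  markov_measure_on C muC piC (Qm (m:=m) P) ->
  (forall x, Sigma P x -> exists2 y, SigmaC P C y & vartheta y = x) /\
  (forall B : set (seqspace x0), measurable B ->
     muC ((@vartheta X m : seqspace r0 -> seqspace x0) @^-1` B) = mu B).
Proof.
move=> _ P_stoch P_irr p_stat _ multicone C_rec piC_stat mu_markov muC_markov.
split=> [x Sx|].
  by have := vartheta_surj multicone P_stoch P_irr p_stat C_rec piC_stat Sx.
have mu_fin : (mu setT < +oo)%E.
  case: p_stat => _ p_sum1 _.
  by rewrite (markov_measure_setT mu_markov p_sum1) ltry.
pose vt : seqspace r0 -> seqspace x0 := @vartheta X m.
apply: (cyl_measure_unique (m1 := pushforward muC vt) mu_fin).
- exact: measurable_comp_seq.
- move=> i w.
  exact: (muC_preimage_cyl multicone P_stoch P_irr p_stat C_rec piC_stat).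
Qed.
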